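(* Let $\Psi$ be a finite set of contexts and $\psi_t$ a target context, and assume $D(x\mid\psi)>0$ for every $\psi\in\Psi$ and every $x\models\psi$. Then there exist finite constants $\beta_\psi\ge0$ ($\psi\in\Psi$), depending only on $\Psi$, $\psi_t$ and $D$, such that for every $h\in\mathcal{H}$ for which $\Psi$ is representative for $\psi_t$, $$L_{D,\psi_t}(h)\le\sum_{\psi\in\Psi}\beta_\psi\,L_{D,\psi}(h).$$
   Context: Let $X_1,\dots,X_n$ be Boolean variables and $\Phi=\{\phi_1,\dots,\phi_m\}$ candidate formulas; $\phi(c)=\bigwedge_{j:c_j=1}\phi_j$ for $c\in\{0,1\}^m$, $f_w(x)=\sum_jw_j\mathbb{1}[x\models\phi_j]$ for $w\in[-1,1]^m$. A context is a Boolean formula over the variables. The MAX-SAT classifier $h_{c,w}(x,\psi)=1$ iff $x\models\phi(c)\wedge\psi$ and $f_w(x)\ge f_w(x')$ for all $x'\models\phi(c)\wedge\psi$, else $0$; $\mathcal{H}$ is the set of these. A ground-truth $h^*\in\mathcal{H}$ labels the data (noiseless). For each context $\psi$, $D(x\mid\psi)$ is a distribution over assignments satisfying $\psi$, and $L_{D,\psi}(h)=\sum_{x}\mathbb{1}[h(x,\psi)\neq h^*(x,\psi)]D(x\mid\psi)$. Representativeness: for $h\in\mathcal{H}$, let $\chi(\psi,x,\psi')$ hold iff $x\models\psi\wedge\psi'$ and ($h(x,\psi)\neq h^*(x,\psi)\Rightarrow h(x,\psi')\neq h^*(x,\psi')$); let $\#(\psi,x)=|\{\psi'\in\Psi:\chi(\psi,x,\psi')\}|$.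 $\Psi$ is representative for $\psi_t$ (w.r.t. $h^*$ and $h$) iff $\#(\psi_t,x)>0$ for all assignments $x$. *)

From mathcomp Require Import all_boot all_order all_algebra.
Set Implicit Arguments. Unset Strict Implicit. Unset Printing Implicit Defensive.
Import Order.TTheory GRing.Theory Num.Theory.
Local Open Scope ring_scope.

Definition assignment (n : nat) := {ffun 'I_n -> bool}.
(* Boolean formulas over X_1..X_n, represented semantically by their truth
   tables; x |= phi  is  phi x. *)
Definition formula (n : nat) := {ffun assignment n -> bool}.

Definition phi_c n m (Phi : 'I_m -> formula n) (c : {ffun 'I_m -> bool})
  (x : assignment n) : bool := [forall j, c j ==> Phi j x].

Definition f_w (R : realFieldType) n m (Phi : 'I_m -> formula n) (w : 'I_m -> R)
  (x : assignment n) : R := \sum_(j < m) w j * (Phi j x)%:R.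

Definition h_cw (R : realFieldType) n m (Phi : 'I_m -> formula n)
  (c : {ffun 'I_m -> bool}) (w : 'I_m -> R) (x : assignment n) (psi : formula n)
  : bool :=
  [&& phi_c Phi c x, psi x &
      [forall x', (phi_c Phi c x' && psi x') ==> (f_w Phi w x' <= f_w Phi w x)]].

Definition inH (R : realFieldType) n m (Phi : 'I_m -> formula n)
  (h : assignment n -> formula n -> bool) : Prop :=
  exists (c : {ffun 'I_m -> bool}) (w : 'I_m -> R),
    (forall j, -1 <= w j <= 1) /\ (forall x psi, h x psi = h_cw Phi c w x psi).

Definition is_cond_distr (R : realFieldType) n (D : formula n -> assignment n -> R)
  (psi : formula n) : Prop :=
  (forall x, 0 <= D psi x) /\ (forall x, ~~ psi x -> D psi x = 0) /\
  \sum_(x : assignment n) D psi x = 1.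

Definition loss (R : realFieldType) n (D : formula n -> assignment n -> R)
  (hstar h : assignment n -> formula n -> bool) (psi : formula n) : R :=
  \sum_(x : assignment n) (h x psi != hstar x psi)%:R * D psi x.

Definition chi n (hstar h : assignment n -> formula n -> bool)
  (psi : formula n) (x : assignment n) (psi' : formula n) : bool :=
  [&& psi x, psi' x &
      (h x psi != hstar x psi) ==> (h x psi' != hstar x psi')].

Definition count_rep n (Psi : {set formula n})
  (hstar h : assignment n -> formula n -> bool) (psi : formula n)
  (x : assignment n) : nat :=
  #|[set psi' in Psi | chi hstar h psi x psi']|.

Definition representative n (Psi : {set formula n}) (psi_t : formula n)
  (hstar h : assignment n -> formula n -> bool) : Prop :=
  forall x : assignment n, psi_t x -> (0 < count_rep Psi hstar h psi_t x)%N.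

(* An error of h on the target context at x is, by representativeness, also an
   error on some context psi of Psi with x |= psi.  On such x the target
   distribution is dominated by a multiple of D(. | psi): since D(. | psi) is
   positive on psi, the ratio D(x | psi_t) / D(x | psi) is finite, and beta_psi
   can be taken to be the sum of these ratios over all assignments (terms with
   D(x | psi) = 0 vanish, as x / 0 = 0). *)
From mathcomp Require Import all_boot all_order all_algebra.
Set Implicit Arguments. Unset Strict Implicit. Unset Printing Implicit Defensive.
Import Order.TTheory GRing.Theory Num.Theory.
Local Open Scope ring_scope.

Section RatioBound.

Variables (R : realFieldType) (T : finType).

Definition ratio_bound (p q : T -> R) : R := \sum_x p x / q x.

Lemma ratio_bound_ge0 (p q : T -> R) :
  (forall x, 0 <= p x) -> (forall x, 0 <= q x) -> 0 <= ratio_bound p q.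
Proof. by move=> p0 q0; apply: sumr_ge0 => x _; exact: divr_ge0. Qed.

Lemma ler_ratio_bound (p q : T -> R) y :
  (forall x, 0 <= p x) -> (forall x, 0 <= q x) -> p y / q y <= ratio_bound p q.
Proof.
move=> p0 q0; rewrite /ratio_bound (bigD1 y) //= lerDl.
by apply: sumr_ge0 => x _; exact: divr_ge0.
Qed.

Lemma sum_le_ratio_bound (a p q : T -> R) :
  (forall x, 0 <= a x) -> (forall x, 0 <= p x) -> (forall x, 0 <= q x) ->
  (forall x, a x != 0 -> 0 < q x) ->
  \sum_x a x * p x <= ratio_bound p q * \sum_x a x * q x.
Proof.
move=> a0 p0 q0 aq; rewrite mulr_sumr; apply: ler_sum => x _.
have [->|ax] := eqVneq (a x) 0.
  by rewrite !mul0r mulr0.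
have qx := aq x ax.
rewrite mulrCA ler_wpM2l // -(divfK (lt0r_neq0 qx) (p x)) ler_pM2r //.
exact: ler_ratio_bound.
Qed.

End RatioBound.

Section Representative.

Variables (R : realFieldType) (n : nat) (D : formula n -> assignment n -> R).
Variables (hstar h : assignment n -> formula n -> bool).

Lemma loss_restrict (psi : formula n) :
  (forall x, ~~ psi x -> D psi x = 0) ->
  loss D hstar h psi =
    \sum_x ((h x psi != hstar x psi) && psi x)%:R * D psi x.
Proof.
move=> Dz; apply: eq_bigr => x _.
by have [|/Dz ->] := boolP (psi x); rewrite ?andbT // !mulr0.
Qed.

Variables (Psi : {set formula n}) (psi_t : formula n).

Lemma mistake_le_sum_mistakes (x : assignment n) :
  representative Psi psi_t hstar h -> psi_t x ->
  (h x psi_t != hstar x psi_t)%:R <=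
    \sum_(psi in Psi) ((h x psi != hstar x psi) && psi x)%:R :> R.
Proof.
move=> rep tx.
case: (boolP (h x psi_t != hstar x psi_t)) => err_t; last first.
  by apply: sumr_ge0 => psi _; exact: ler0n.
have := rep x tx; rewrite /count_rep card_gt0 => /set0Pn [psi].
rewrite inE => /andP [Psi_psi /and3P [_ psi_x err_imp]].
rewrite (bigD1 psi) //= (implyP err_imp) // psi_x /= lerDl.
by apply: sumr_ge0 => psi' _; exact: ler0n.
Qed.

Lemma loss_le_sum_restricted :
  representative Psi psi_t hstar h ->
  (forall x, 0 <= D psi_t x) -> (forall x, ~~ psi_t x -> D psi_t x = 0) ->
  loss D hstar h psi_t <=
    \sum_(psi in Psi)
      \sum_x ((h x psi != hstar x psi) && psi x)%:R * D psi_t x.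
Proof.
move=> rep Dt0 Dtz; rewrite exchange_big /=; apply: ler_sum => x _.
rewrite -mulr_suml; have [tx|/Dtz ->] := boolP (psi_t x); last by rewrite !mulr0.
by rewrite ler_wpM2r // mistake_le_sum_mistakes.
Qed.

End Representative.

Theorem lemma1 (R : realFieldType) (n : nat) (Psi : {set formula n})
  (psi_t : formula n) (D : formula n -> assignment n -> R) :
  (forall psi, psi \in Psi -> is_cond_distr D psi) ->
  is_cond_distr D psi_t ->
  (forall psi x, psi \in Psi -> psi x -> 0 < D psi x) ->
  exists beta : formula n -> R,
    (forall psi, psi \in Psi -> 0 <= beta psi) /\
    forall (m : nat) (Phi : 'I_m -> formula n)
           (hstar h : assignment n -> formula n -> bool),
      inH R Phi hstar -> inH R Phi h ->
      representative Psi psi_t hstar h ->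
      loss D hstar h psi_t <= \sum_(psi in Psi) beta psi * loss D hstar h psi.
Proof.
move=> distr [Dt0 [Dtz _]] Dpos.
exists (fun psi => ratio_bound (D psi_t) (D psi)); split.
  by move=> psi /distr [D0 _]; exact: ratio_bound_ge0.
move=> m Phi hstar h _ _ rep.
apply: le_trans (loss_le_sum_restricted rep Dt0 Dtz) _.
apply: ler_sum => psi Psi_psi; have [D0 [Dz _]] := distr psi Psi_psi.
rewrite loss_restrict //; apply: sum_le_ratio_bound => // x.
by have [/(Dpos _ _ Psi_psi) //|_] := boolP (psi x); rewrite andbF eqxx.
Qed.
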